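(* For all positive integers $n,d,k$, the value of the multiple-treasures-per-door search game satisfies $v_M(n,d,k)\le \frac kn$.
   Context: Multiple-treasures-per-door search game with parameters $(n,d,k)$: the hider places $d$ treasures behind $n$ doors, several treasures allowed behind the same door. In each round the searcher selects at most $k$ doors; if none of them hides a treasure not yet found, she loses; otherwise the hider reveals one not-yet-found treasure behind one of the selected doors (hider's choice). The searcher wins if she finds all $d$ treasures with a total of $d$ guesses. Players may randomize and the searcher may adapt to previous answers; $v_M(n,d,k)$ is the probability the searcher wins under optimal play by both. *)

From mathcomp Require Import all_boot all_order all_algebra.
From mathcomp Require Import boolp classical_sets reals.
Set Implicit Arguments. Unset Strict Implicit. Unset Printing Implicit Defensive.
Import Order.TTheory GRing.Theory Num.Theory.
Local Open Scope ring_scope.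
Local Open Scope classical_set_scope.

(* Multiple-treasures-per-door search game M(n,d,k).
   Doors are 'I_n.  A history is the chronological list of
   (queried set of doors, door revealed by the hider). *)
Definition history (n : nat) := seq ({set 'I_n} * 'I_n).

Definition searcher_strat (n : nat) := history n -> {set 'I_n}.

(* Hider pure strategy: a placement of d treasures (counts per door,
   several per door allowed) and a rule choosing which door to reveal
   given the history and the current query. *)
Record hider_strat (n d : nat) := HiderStrat {
  hplace : {ffun 'I_n -> nat};
  hplace_sum : (\sum_(i < n) hplace i)%N == d;
  hreveal : history n -> {set 'I_n} -> 'I_n }.

Definition take_one (n : nat) (c : {ffun 'I_n -> nat}) (j : 'I_n) :
  {ffun 'I_n -> nat} := [ffun i => if i == j then (c i).-1 else c i].

(* The door actually revealed: the hider's choice if it is legal (in the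
   query and still hiding an unfound treasure), otherwise some legal door.
   Thus every legal reveal behaviour is represented and no illegal one. *)
Definition revealed (n : nat) (c : {ffun 'I_n -> nat}) (S : {set 'I_n})
  (j0 : 'I_n) : 'I_n :=
  if (j0 \in S) && (0 < c j0)%N then j0
  else odflt j0 [pick j in S | (0 < c j)%N].

(* Play of t remaining rounds with remaining counts c; true = searcher wins.
   The searcher loses if she queries more than k doors or if her query
   contains no not-yet-found treasure. *)
Fixpoint play (n k : nat) (s : searcher_strat n)
  (r : history n -> {set 'I_n} -> 'I_n)
  (t : nat) (c : {ffun 'I_n -> nat}) (h : history n) : bool :=
  match t with
  | 0 => true
  | t'.+1 =>
      let S := s h in
      if (#|S| <= k)%N && [exists j in S, (0 < c j)%N] then
        let j := revealed c S (r h S) in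
        play k s r t' (take_one c j) (rcons h (S, j))
      else false
  end.

Definition searcher_wins (n d k : nat) (s : searcher_strat n)
  (x : hider_strat n d) : bool :=
  play k s (hreveal x) d (hplace x) [::].

(* Hider mixed strategy: finitely supported probability distribution on
   hider pure strategies, given as a weighted list. *)
Definition hider_mixed (R : realType) (n d : nat) :=
  seq (R * hider_strat n d).

Definition is_distr (R : realType) (n d : nat) (mu : hider_mixed R n d) :=
  all (fun p => 0 <= p.1) mu /\ \sum_(p <- mu) p.1 = 1.

Definition win_prob (R : realType) (n d k : nat) (mu : hider_mixed R n d)
  (s : searcher_strat n) : R :=
  \sum_(p <- mu) p.1 * (searcher_wins k s p.2)%:R.

Definition vM (R : realType) (n d k : nat) : R :=
  inf [set x : R | exists mu : hider_mixed R n d, is_distr mu /\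
         x = sup [set y : R | exists s : searcher_strat n, y = win_prob k mu s]].

From mathcomp Require Import all_boot all_order all_algebra.
From mathcomp Require Import boolp classical_sets reals.
Import Order.TTheory GRing.Theory Num.Theory.
Local Open Scope ring_scope.
Set Implicit Arguments.
Unset Strict Implicit.
Unset Printing Implicit Defensive.

(* The hider puts all d treasures behind a single door chosen uniformly at
   random and always reveals that door.  Then the searcher's first query,
   which cannot depend on anything, must contain this door, and a query of
   at most k doors does so with probability at most k/n. *)

Definition single_door_count (n d : nat) (j : 'I_n) : {ffun 'I_n -> nat} :=
  [ffun i => if i == j then d else 0%N].

Lemma single_door_count_sum (n d : nat) (j : 'I_n) :
  (\sum_(i < n) single_door_count d j i)%N == d.
Proof.
rewrite (bigD1 j) //= big1 ?addn0 ?ffunE ?eqxx //.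
by move=> i /negbTE neq_ij; rewrite ffunE neq_ij.
Qed.

Definition single_door_hider (n d : nat) (j : 'I_n) : hider_strat n d :=
  HiderStrat (single_door_count_sum d j) (fun _ _ => j).

Lemma searcher_wins_single_door (n d k : nat) (s : searcher_strat n) (j : 'I_n) :
  (0 < d)%N -> searcher_wins k s (single_door_hider d j) ->
  (j \in s [::]) && (#|s [::]| <= k)%N.
Proof.
case: d => // d _; rewrite /searcher_wins /=.
case: (#|s [::]| <= k)%N; last by rewrite andbF.
case: existsP => // -[i /andP [i_in_s]]; rewrite ffunE.
by case: eqP => // <-; rewrite i_in_s.
Qed.

Lemma sum_query_bound (n k : nat) (S : {set 'I_n}) :
  (\sum_(j < n) ((j \in S) && (#|S| <= k)) <= k)%N.
Proof.
case: (leqP #|S| k) => [le_S_k | _]; last by rewrite big1 // => j _; rewrite andbF.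
apply: leq_trans le_S_k; rewrite -sum1_card [leqRHS]big_mkcond.
by apply: leq_sum => j _; rewrite andbT; case: (j \in S).
Qed.

Definition uniform_single_door (R : realType) (n d : nat) : hider_mixed R n d :=
  [seq (n%:R^-1, single_door_hider d j) | j <- enum 'I_n].

Lemma uniform_single_door_distr (R : realType) (n d : nat) :
  (0 < n)%N -> is_distr (uniform_single_door R n d).
Proof.
move=> n_gt0; split.
  by rewrite all_map; apply/allP => j _ /=; rewrite invr_ge0.
rewrite big_map big_enum /= sumr_const card_ord -[_ *+ n]mulr_natr mulVf //.
by rewrite pnatr_eq0 -lt0n.
Qed.

Lemma win_prob_uniform_single_door (R : realType) (n d k : nat)
    (s : searcher_strat n) :
  (0 < d)%N -> win_prob k (uniform_single_door R n d) s <= k%:R / n%:R.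
Proof.
move=> d_gt0; rewrite /win_prob big_map big_enum /= -mulr_sumr mulrC.
rewrite ler_wpM2r ?invr_ge0 // -natr_sum ler_nat.
apply: leq_trans (sum_query_bound k (s [::])); apply: leq_sum => j _.
by case: searcher_wins (@searcher_wins_single_door n d k s j d_gt0) => // ->.
Qed.

Lemma sup_ge0 (R : realType) (E : set R) :
  (forall x, E x -> 0 <= x) -> 0 <= sup E.
Proof.
move=> E_ge0; have [[[x Ex] ubE] | no_sup] := pselect (has_sup E).
  exact: le_trans (E_ge0 x Ex) (sup_upper_bound (conj (ex_intro _ x Ex) ubE) Ex).
by rewrite sup_out.
Qed.

Lemma win_prob_ge0 (R : realType) (n d k : nat) (mu : hider_mixed R n d)
    (s : searcher_strat n) :
  is_distr mu -> 0 <= win_prob k mu s.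
Proof.
case=> mu_ge0 _; rewrite /win_prob.
elim: mu mu_ge0 => [|p mu IH]; rewrite ?big_nil ?big_cons //= => /andP [p_ge0 /IH].
exact/addr_ge0/mulr_ge0.
Qed.

Lemma vM_le (R : realType) (n d k : nat) (mu : hider_mixed R n d) (b : R) :
  is_distr mu -> (forall s, win_prob k mu s <= b) -> vM R n d k <= b.
Proof.
move=> mu_distr win_le_b.
pose value_of (nu : hider_mixed R n d) :=
  sup [set y : R | exists s : searcher_strat n, y = win_prob k nu s].
apply: (@le_trans _ _ (value_of mu)).
  apply: ge_inf; last by exists mu.
  exists 0 => _ [nu [nu_distr ->]]; apply: sup_ge0 => _ [s ->].
  exact: win_prob_ge0.
apply: ge_sup => [|_ [s ->] //].
by exists (win_prob k mu (fun _ => finset.set0)); exists (fun _ => finset.set0).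
Qed.

Theorem claim8 (R : realType) (n d k : nat) :
  (0 < n)%N -> (0 < d)%N -> (0 < k)%N ->
  vM R n d k <= k%:R / n%:R.
Proof.
move=> n_gt0 d_gt0 _.
apply: (vM_le (uniform_single_door_distr R d n_gt0)) => s.
exact: win_prob_uniform_single_door.
Qed.
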